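(* Consider the linear vehicle platoon model $\dot{x}(t)=A_{\mathrm{c}}x(t)+B_{\mathrm{c}}u(t)$ with communication attempt time instants $\mathcal{S}=\{s_0,s_1,s_2,\ldots\}$ and the time-discretized braking model (so that the reference desired acceleration $u_0(t)$ is constant on each interval $[s_k,s_{k+1})$). If $\mathcal{S}\subseteq\mathcal{T}$ with $\mathcal{T}\triangleq\{t_0,t_1,t_2,\ldots\}$ and there exists $\alpha>0$ such that \[ t_{k+1}-t_{k}\leq\ln\left(\frac{\mu(\tilde{A})\alpha}{\varphi\|\tilde{x}(t_{k})\|}+1\right)/\mu(\tilde{A}) \] for every $k\in\mathbb{N}_0$, where \[ \varphi\triangleq\max_{i\in\{2,\ldots,n\}}\|q_i^{\top}(A_{\mathrm{c}}b_1^{\top}+B_{\mathrm{c}}b_2^{\top})\|, \] then \[ |d_i(t)-d_i(t_k)|\leq\alpha,\quad t\in[t_k,t_{k+1}), \] for every $k\in\mathbb{N}_0$ and every $i\in\{2,\ldots,n\}$.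
   Context: The platoon consists of a virtual reference vehicle and $n$ actual vehicles; its dynamics are the linear system $\dot{x}(t)=A_{\mathrm{c}}x(t)+B_{\mathrm{c}}u(t)$ with state $x(t)\in\mathbb{R}^{3+6n}$ (stacking $[p_0,v_0,a_0]$ for the reference vehicle and $[e_i,\dot e_i,p_i,v_i,a_i,u_i]$ for each vehicle $i=1,\dots,n$, with $p$ positions) and input $u(t)=[u_0(t),\hat u_0(t),\hat u_1(t),\ldots,\hat u_{n-1}(t)]^\top\in\mathbb{R}^{1+n}$, where $A_{\mathrm{c}}\in\mathbb{R}^{(3+6n)\times(3+6n)}$ and $B_{\mathrm{c}}\in\mathbb{R}^{(3+6n)\times(1+n)}$ are the platoon system matrices. Communication attempts occur at $s_j=jT$, $T>0$; the received desired accelerations $\hat u_i(t)$ ($i\ge 1$) are held constant on $[s_j,s_{j+1})$ (updated at $s_j$ on success, kept on packet loss), $\hat u_0=u_0$, and the time-discretized braking model sets $u_0(t)=u_{0,k}$ constant on $[s_k,s_{k+1})$. Hence, when $\mathcal{S}\subseteq\mathcal{T}$, $u(t)=u(t_k)$ on $[t_k,t_{k+1})$. Inter-vehicle distances are $d_i(t)=p_{i-1}(t)-p_i(t)-L_i=q_i^\top x(t)-L_i$ for $i\in\{2,\ldots,n\}$, where $L_i>0$ is the vehicle length and $q_i\in\mathbb{R}^{3+6n}$ has entry $-1$ at position $6i+6$, entry $1$ at position $6i$, and $0$ elsewhere. The lifted state is $\tilde x(t)=[x^\top(t),u^\top(t)]^\top\in\mathbb{R}^{4+7n}$, satisfying $\dot{\tilde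 x}(t)=\tilde A\tilde x(t)$ on $[t_k,t_{k+1})$ with $\tilde{A}=\begin{bmatrix}A_{\mathrm{c}} & B_{\mathrm{c}}\\ 0 & 0\end{bmatrix}$. The matrices $b_1=\begin{bmatrix}I_{3+6n}\\ 0_{(1+n)\times(3+6n)}\end{bmatrix}\in\mathbb{R}^{(4+7n)\times(3+6n)}$ and $b_2=\begin{bmatrix}0_{(3+6n)\times(1+n)}\\ I_{1+n}\end{bmatrix}\in\mathbb{R}^{(4+7n)\times(1+n)}$, where $I_m$ denotes the $m\times m$ identity matrix, satisfy $x=b_1^\top\tilde x$, $u=b_2^\top\tilde x$. $\|\cdot\|$ is the Euclidean norm / induced matrix norm and $\mu(M)=\lambda_{\max}((M+M^\top)/2)$ is the logarithmic norm. *)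

From HB Require Import structures.
From mathcomp Require Import all_boot all_order all_algebra.
From mathcomp Require Import all_classical all_reals all_analysis.
Set Implicit Arguments. Unset Strict Implicit. Unset Printing Implicit Defensive.
Import Order.TTheory GRing.Theory Num.Theory.
Import numFieldNormedType.Exports.
Local Open Scope classical_set_scope.
Local Open Scope ring_scope.

Section Defs.
Variable R : realType.

Definition enorm (N : nat) (v : 'cV[R]_N) : R :=
  Num.sqrt (\sum_(i < N) v i 0 ^+ 2).

Definition opnorm (m N : nat) (A : 'M[R]_(m, N)) : R :=
  sup [set y | exists2 v : 'cV[R]_N, enorm v = 1 & y = enorm (A *m v)].

Definition lambda_max (N : nat) (M : 'M[R]_N) : R :=
  sup [set a | eigenvalue M a].

Definition lognorm (N : nat) (M : 'M[R]_N) : R :=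
  lambda_max (2^-1 *: (M + M^T)).

Definition nx (n : nat) : nat := (3 + 6 * n)%N.
Definition nu (n : nat) : nat := (1 + n)%N.

Definition Atilde (n : nat) (Ac : 'M[R]_(nx n)) (Bc : 'M[R]_(nx n, nu n))
  : 'M[R]_(nx n + nu n) := block_mx Ac Bc 0 0.

Definition b1 (n : nat) : 'M[R]_(nx n + nu n, nx n) := col_mx 1%:M 0.
Definition b2 (n : nat) : 'M[R]_(nx n + nu n, nu n) := col_mx 0 1%:M.

Definition xtilde (n : nat) (x : 'cV[R]_(nx n)) (u : 'cV[R]_(nu n))
  : 'cV[R]_(nx n + nu n) := col_mx x u.

(* q_i : selects p_{i-1} - p_i.  With 1-based positions, p_j sits at
   position 6j (j >= 1); so +1 at position 6(i-1), -1 at position 6i,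
   i.e. 0-based indices 6i-7 and 6i-1 (for i >= 2). *)
Definition q (n i : nat) : 'cV[R]_(nx n) :=
  \col_(j < nx n) ((nat_of_ord j == 6 * i - 7)%N%:R - (nat_of_ord j == 6 * i - 1)%N%:R).

Definition dist (n : nat) (L : nat -> R) (x : R -> 'cV[R]_(nx n)) (i : nat) (t : R) : R :=
  ((q n i)^T *m x t) 0 0 - L i.

Definition phi (n : nat) (Ac : 'M[R]_(nx n)) (Bc : 'M[R]_(nx n, nu n)) : R :=
  \big[Num.max/0]_(2 <= i < n.+1)
     opnorm ((q n i)^T *m (Ac *m (b1 n)^T + Bc *m (b2 n)^T)).

End Defs.

(* On [t_k, t_(k+1)) no communication attempt occurs, so the input is frozen at u(t_k) and
   the lifted state xtilde = [x; u] solves xtilde' = Atilde xtilde.  With mu the largest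
   eigenvalue of the symmetric part of Atilde (it exists: maximise the Rayleigh quotient
   on the compact unit sphere), d|xtilde|^2/dt <= 2 mu |xtilde|^2, hence
   |xtilde(t)| <= |xtilde(t_k)| e^(mu (t - t_k)).  As d_i' = q_i^T (Ac b1^T + Bc b2^T) xtilde,
   |d_i'| <= phi |xtilde(t_k)| e^(mu (t - t_k)), and integrating gives
   |d_i(t) - d_i(t_k)| <= phi |xtilde(t_k)| (e^(mu (t - t_k)) - 1) / mu, which is at most
   alpha exactly under the inter-event bound. *)

From HB Require Import structures.
From mathcomp Require Import all_boot all_order all_algebra.
From mathcomp Require Import all_classical all_reals all_analysis.
From mathcomp Require Import ring lra.
Set Implicit Arguments.
Unset Strict Implicit.
Unset Printing Implicit Defensive.
Import Order.TTheory GRing.Theory Num.Theory.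
Import numFieldNormedType.Exports.
Local Open Scope classical_set_scope.
Local Open Scope ring_scope.

Section QuadraticForm.
Variables (R : realType) (N : nat).
Implicit Types (u v w : 'rV[R]_N) (P S : 'M[R]_N).

Definition bform P u v : R := (u *m P *m v^T) 0 0.

Definition sqnorm w : R := \sum_j w 0 j ^+ 2.

Lemma bform1 w : bform 1%:M w w = sqnorm w.
Proof. by rewrite /bform mulmx1 mxE; apply: eq_bigr => j _; rewrite mxE expr2. Qed.

Lemma sqnorm_ge0 w : 0 <= sqnorm w.
Proof. by apply: sumr_ge0 => j _; apply: sqr_ge0. Qed.

Lemma sqnorm_eq0 w : sqnorm w = 0 -> w = 0.
Proof.
move=> /psumr_eq0P w0; apply/rowP => j; rewrite mxE.
by apply/eqP; rewrite -sqrf_eq0; apply/eqP/w0 => // k _; apply: sqr_ge0.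
Qed.

Lemma bformDl P u v w : bform P (u + v) w = bform P u w + bform P v w.
Proof. by rewrite /bform !mulmxDl mxE. Qed.

Lemma bformDr P u v w : bform P w (u + v) = bform P w u + bform P w v.
Proof. by rewrite /bform linearD /= mulmxDr mxE. Qed.

Lemma bformZl P k u v : bform P (k *: u) v = k * bform P u v.
Proof. by rewrite /bform -!scalemxAl mxE. Qed.

Lemma bformZr P k u v : bform P u (k *: v) = k * bform P u v.
Proof. by rewrite /bform linearZ /= -scalemxAr mxE. Qed.

Lemma bform_tr P u v : bform P^T u v = bform P v u.
Proof.
by rewrite /bform -[in LHS](trmxK (u *m P^T *m v^T)) [LHS]mxE !trmx_mul !trmxK mulmxA.
Qed.

Lemma bformD P S u v : bform (P + S) u v = bform P u v + bform S u v.
Proof. by rewrite /bform mulmxDr mulmxDl mxE. Qed.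

Lemma bformZ k P u v : bform (k *: P) u v = k * bform P u v.
Proof. by rewrite /bform -scalemxAr -scalemxAl mxE. Qed.

Lemma bformN P u v : bform (- P) u v = - bform P u v.
Proof. by rewrite -scaleN1r bformZ mulN1r. Qed.

Lemma bform_scalar k u v : bform k%:M u v = k * bform 1%:M u v.
Proof. by rewrite /bform mul_mx_scalar mulmx1 -scalemxAl mxE. Qed.

Lemma bform0l P v : bform P 0 v = 0.
Proof. by rewrite /bform !mul0mx mxE. Qed.

(* Polarization: [0 <= Q (c + e w) = 2 e B(c, w) + e^2 Q(w)] for every [e]
   forces [B(c, w) = 0]. *)
Lemma psd_form_kernel P c : P^T = P -> (forall w, 0 <= bform P w w) ->
  bform P c c = 0 -> c *m P = 0.
Proof.
move=> sP Pge0 Pc0.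
have orth w : bform P c w = 0.
  set a := bform P c w; set b := bform P w w.
  have quad e : 0 <= 2 * e * a + e ^+ 2 * b.
    have := Pge0 (c + e *: w).
    rewrite !bformDl !bformDr !bformZl !bformZr Pc0 -{2}sP bform_tr -/a -/b.
    by congr (0 <= _); ring.
  have b_ge0 : 0 <= b by apply: Pge0.
  have b1_gt0 : 0 < b + 1 by lra.
  pose d := (b + 1)^-1.
  have d_gt0 : 0 < d by rewrite invr_gt0.
  have dK : d * (b + 1) = 1 by rewrite mulVf ?gt_eqF.
  have : 0 <= - (a ^+ 2 * d * (1 + d)).
    apply: (le_trans (quad (- a * d))); rewrite le_eqVlt; apply/orP; left.
    have -> : 1 + d = 1 + d * (b + 1) - d * b by ring.
    by rewrite dK; apply/eqP; ring.
  move=> h; apply/eqP; rewrite -sqrf_eq0 eq_le sqr_ge0 andbT; nra.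
apply: sqnorm_eq0; rewrite -bform1 /bform mulmx1; exact: orth.
Qed.

Lemma bform_continuous P : continuous (fun w => bform P w w).
Proof.
have -> : (fun w => bform P w w) = (fun w => \sum_j (\sum_i w 0 i * P i j) * w 0 j).
  apply/funext => w; rewrite /bform mxE; apply: eq_bigr => j _; rewrite !mxE.
  by congr (_ * _); apply: eq_bigr => i _; rewrite mxE.
apply: continuous_big => [|j _]; first exact: add_continuous.
move=> w; apply: continuousM; last exact: coord_continuous.
apply: continuous_big => [|i _ v]; first exact: add_continuous.
by apply: continuousM; [exact: coord_continuous | exact: cst_continuous].
Qed.

Lemma unit_sphere_compact : compact [set w | sqnorm w = 1].
Proof.
apply: bounded_closed_compact.
  exists 1; split => // M M1 w /= w1.
  rewrite /Num.Def.normr /= mx_normrE.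
  apply: bigmax_le => [|[i j] _ /=]; first exact: ltW (lt_trans _ M1).
  have wj1 : w 0 j ^+ 2 <= 1.
    by rewrite -w1 /sqnorm (bigD1 j) //= lerDl sumr_ge0 // => k _; apply: sqr_ge0.
  rewrite (ord1 i); apply: le_trans (ltW M1).
  by rewrite ler_norml; apply/andP; split; nra.
apply: (@preimage_closed _ _ sqnorm [set 1]); last exact: closed_eq.
have -> : sqnorm = fun w => bform 1%:M w w by apply/funext => w; rewrite bform1.
by move=> w _; apply: bform_continuous.
Qed.

(* A maximiser [c] of the Rayleigh quotient makes [lam%:M - S] positive semidefinite
   with [c] in its kernel, so [c] is an eigenvector for [lam]. *)
Lemma rayleigh_max_eigenvalue S : (0 < N)%N -> S^T = S ->
  exists lam, [/\ eigenvalue S lam, (forall a, eigenvalue S a -> a <= lam) &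
    forall w, bform S w w <= lam * sqnorm w].
Proof.
move=> N_gt0 sS.
have sphere0 : [set w | sqnorm w = 1] !=set0.
  exists (delta_mx 0 (Ordinal N_gt0)); rewrite /= -bform1 /bform mulmx1 trmx_delta.
  by rewrite mul_delta_mx mxE !eqxx.
have [c] := compact_EVT_max sphere0 unit_sphere_compact
  (continuous_subspaceT (bform_continuous (P:=S))).
rewrite inE /= => c1 cmax.
pose lam := bform S c c.
have Sle w : bform S w w <= lam * sqnorm w.
  have [w0|wn0] := eqVneq (sqnorm w) 0.
    by rewrite (sqnorm_eq0 w0) bform0l -bform1 bform0l mulr0.
  have w_gt0 : 0 < sqnorm w by rewrite lt_neqAle eq_sym wn0 sqnorm_ge0.
  pose k := (Num.sqrt (sqnorm w))^-1.
  have kk : k * k * sqnorm w = 1.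
    by rewrite -invfM -expr2 sqr_sqrtr ?sqnorm_ge0 // mulVf // gt_eqF.
  have : bform S (k *: w) (k *: w) <= lam.
    by apply: cmax; rewrite inE /= -bform1 bformZl bformZr bform1 mulrA.
  rewrite bformZl bformZr mulrA => kle.
  have -> : bform S w w = k * k * bform S w w * sqnorm w by rewrite mulrAC kk mul1r.
  by rewrite ler_wpM2r // ltW.
pose P := lam%:M - S.
have QP w : bform P w w = lam * sqnorm w - bform S w w.
  by rewrite bformD bformN bform_scalar bform1.
have cP : c *m P = 0.
  apply: psd_form_kernel => [|w|]; rewrite ?QP ?subr_ge0 //.
    by rewrite linearB /= tr_scalar_mx sS.
  by rewrite c1 mulr1 subrr.
have c_eigen : c *m S = lam *: c.
  by move/eqP: cP; rewrite mulmxBr mul_mx_scalar subr_eq0 => /eqP <-.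
have cn0 : c != 0.
  by apply/eqP => c0; move: c1; rewrite c0 -bform1 bform0l => /esym/eqP; rewrite oner_eq0.
exists lam; split => [|a /eigenvalueP [v va vn0]|//]; first by apply/eigenvalueP; exists c.
have v_gt0 : 0 < sqnorm v.
  by rewrite lt_neqAle sqnorm_ge0 andbT eq_sym; apply: contra_neq vn0 => /sqnorm_eq0.
rewrite -(ler_pM2r v_gt0); apply: le_trans (Sle v).
by rewrite -bform1 -bform_scalar /bform va mul_mx_scalar.
Qed.

Lemma lambda_max_maximal_eigenvalue S lam : eigenvalue S lam ->
  (forall a, eigenvalue S a -> a <= lam) -> lambda_max S = lam.
Proof.
move=> el ub; apply/eqP; rewrite eq_le; apply/andP; split.
  by apply: ge_sup => [|a /ub]; first by exists lam.
by apply: sup_upper_bound => //; split; [exists lam | exists lam => a /ub].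
Qed.

Lemma bform_le_lambda_max S w : S^T = S -> bform S w w <= lambda_max S * sqnorm w.
Proof.
case: (posnP N) => [N0 _|N_gt0 sS].
  have no_index (j : 'I_N) : False by case: j => j; rewrite N0.
  by rewrite /bform mxE /sqnorm !big1 ?mulr0 // => j; case: (no_index j).
have [lam [el ub Sle]] := rayleigh_max_eigenvalue N_gt0 sS.
by rewrite (lambda_max_maximal_eigenvalue el ub).
Qed.

End QuadraticForm.

Section EuclideanNorm.
Variables (R : realType) (N : nat).
Implicit Types (z : 'cV[R]_N).

Lemma enorm_ge0 z : 0 <= enorm z.
Proof. exact: sqrtr_ge0. Qed.

Lemma enorm_sq z : enorm z ^+ 2 = \sum_i z i 0 ^+ 2.
Proof. by rewrite sqr_sqrtr // sumr_ge0 // => i _; apply: sqr_ge0. Qed.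

Lemma enorm_trmx z : enorm z ^+ 2 = sqnorm z^T.
Proof. by rewrite enorm_sq; apply: eq_bigr => i _; rewrite mxE. Qed.

Lemma enorm_eq0 z : enorm z = 0 -> z = 0.
Proof.
move=> z0; rewrite -[z]trmxK; apply/eqP; rewrite trmx_eq0; apply/eqP/sqnorm_eq0.
by rewrite -enorm_trmx z0 expr0n.
Qed.

Lemma enormZ k z : enorm (k *: z) = `|k| * enorm z.
Proof.
rewrite /enorm -sqrtr_sqr -sqrtrM ?sqr_ge0 // mulr_sumr.
by congr Num.sqrt; apply: eq_bigr => i _; rewrite mxE exprMn.
Qed.

Lemma opnorm_row_mulmx_le (W : 'rV[R]_N) z : `|(W *m z) 0 0| <= opnorm W * enorm z.
Proof.
have [z0|zn0] := eqVneq (enorm z) 0.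
  by rewrite z0 mulr0 (enorm_eq0 z0) mulmx0 mxE normr0.
have z_gt0 : 0 < enorm z by rewrite lt_neqAle eq_sym zn0 enorm_ge0.
set Y := [set y | exists2 v : 'cV[R]_N, enorm v = 1 & y = enorm (W *m v)].
have Yz : Y (enorm (W *m ((enorm z)^-1 *: z))).
  exists ((enorm z)^-1 *: z) => //.
  by rewrite enormZ ger0_norm ?invr_ge0 ?enorm_ge0 // mulVf.
have Ysup : has_sup Y.
  split; first by exists (enorm (W *m ((enorm z)^-1 *: z))).
  exists (\sum_j `|W 0 j|) => _ [v v1 ->].
  rewrite /enorm big_ord1 sqrtr_sqr mxE; apply: le_trans (ler_norm_sum _ _ _) _.
  apply: ler_sum => j _; rewrite normrM ler_piMr //.
  have vj1 : v j 0 ^+ 2 <= 1.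
    rewrite -(expr1n _ 2) -v1 enorm_sq (bigD1 j) //= lerDl.
    by apply: sumr_ge0 => k _; exact: sqr_ge0.
  by rewrite ler_norml; apply/andP; split; nra.
have := sup_upper_bound Ysup Yz.
rewrite -/(opnorm W) -scalemxAr /enorm big_ord1 sqrtr_sqr mxE normrM.
by rewrite ger0_norm ?invr_ge0 ?enorm_ge0 // ler_pdivrMl // mulrC.
Qed.

Lemma lognorm_quadratic_le (A : 'M[R]_N) z :
  (z^T *m A *m z) 0 0 <= lognorm A * enorm z ^+ 2.
Proof.
rewrite enorm_trmx /lognorm; apply: le_trans (bform_le_lambda_max _ _); last first.
  by rewrite linearZ /= linearD /= trmxK addrC.
rewrite bformZ bformD bform_tr /bform trmxK; lra.
Qed.

End EuclideanNorm.

Section MatrixDerivative.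
Variables (R : realType) (V : normedModType R).

Lemma is_derive_mxP m n (M : V -> 'M[R]_(m, n)) dM s v :
  is_derive s v M dM <-> forall i j, is_derive s v (fun r => M r i j) (dM i j).
Proof.
split => [dMs i j|dMs].
  have Mdv : derivable M s v by [].
  have := derive_mx Mdv; rewrite derive_val => ->; rewrite mxE.
  exact/derivableP/((derivable_mxP M s v).1 Mdv).
have Mdv : derivable M s v by apply/derivable_mxP => i j; exact: ex_derive.
suff <- : 'D_v M s = dM by exact: derivableP.
by rewrite derive_mx //; apply/matrixP => i j; rewrite mxE derive_val.
Qed.

Lemma is_derive_mulmx p m n (W : 'M[R]_(p, m)) (M : V -> 'M[R]_(m, n)) dM s v :
  is_derive s v M dM -> is_derive s v (fun r => W *m M r) (W *m dM).
Proof.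
move=> /is_derive_mxP dMs; apply/is_derive_mxP => i k; rewrite mxE.
have -> : (fun r => (W *m M r) i k) = \sum_j (W i j \*: fun r => M r j k).
  by apply/funext => r; rewrite mxE fct_sumE; apply: eq_bigr.
exact: is_derive_sum.
Qed.

End MatrixDerivative.

Lemma mulmx_entry_continuous (R : realType) p m n (W : 'M[R]_(p, m)) i k :
  continuous (fun M : 'M[R]_(m, n) => (W *m M) i k).
Proof.
have -> : (fun M : 'M[R]_(m, n) => (W *m M) i k) = fun M => \sum_j W i j * M j k.
  by apply/funext => M; rewrite mxE.
apply: continuous_big => [|j _ M]; first exact: add_continuous.
by apply: continuousM; [exact: cst_continuous | exact: coord_continuous].
Qed.

Section RealFunctions.
Variable R : realType.
Implicit Types (f df : R -> R) (a b c s : R).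

Lemma is_derive_expR_affine c a s :
  is_derive s 1 (fun r => expR (c * (r - a))) (expR (c * (s - a)) * c).
Proof.
have dlin : is_derive s 1 (fun r => c * (r - a)) c.
  by apply: is_derive_eq; rewrite subr0 [LHS]mulr1.
exact: (@is_derive1_comp _ expR _ s _ _ (is_derive_expR _) dlin).
Qed.

Lemma expR_affine_continuous c a : continuous (fun r : R => expR (c * (r - a))).
Proof.
move=> r; apply: continuous_comp; last exact: continuous_expR.
by apply: continuousM; [exact: cst_continuous | apply: continuousB; [|exact: cst_continuous]].
Qed.

Lemma ler0_is_derive_le f df a b : a <= b ->
  (forall s, a < s < b -> is_derive s 1 f (df s)) ->
  (forall s, a < s < b -> df s <= 0) ->
  {within `[a, b], continuous f} -> f b <= f a.
Proof.
move=> ab fdf df_le0 cf.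
apply: (@ler0_derive1_le_cc _ f a b) => //; rewrite ?in_itv /= ?lexx ?ab //.
- by move=> s; rewrite in_itv /= => /fdf.
- move=> s; rewrite in_itv /= => sab; have fs := fdf s sab.
  by rewrite derive1E derive_val df_le0.
Qed.

End RealFunctions.

(* Gronwall: [|y|^2 e^(-2 mu (r - a))] is nonincreasing because
   [d/dr |y|^2 = 2 y^T A y <= 2 mu |y|^2]. *)
Lemma enorm_linear_flow_le (R : realType) N (A : 'M[R]_N) (y : R -> 'cV[R]_N) (a b : R) :
  a <= b ->
  (forall s : R, a < s < b -> is_derive s 1 y (A *m y s)) ->
  (forall i, {within `[a, b], continuous (fun r => y r i 0)}) ->
  enorm (y b) <= enorm (y a) * expR (lognorm A * (b - a)).
Proof.
move=> ab dy cy; set mu := lognorm A.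
pose E r := \sum_i y r i 0 ^+ 2.
have E_enorm r : E r = enorm (y r) ^+ 2 by rewrite enorm_sq.
have dE s : a < s < b -> is_derive s 1 E (2 * ((y s)^T *m A *m y s) 0 0).
  move=> sab; have /is_derive_mxP dys := dy s sab.
  have -> : E = \sum_i (fun r => y r i 0 ^+ 2) by apply/funext => r; rewrite fct_sumE.
  apply: is_derive_eq; rewrite -mulmxA mxE mulr_sumr; apply: eq_bigr => i _.
  by rewrite [(y s)^T _ _]mxE -mulr2n mulr_natl.
have E_bound : E b <= E a * expR (2 * mu * (b - a)).
  pose c := - (2 * mu).
  pose H r := E r * expR (c * (r - a)).
  pose dH s := E s * (expR (c * (s - a)) * c) +
    expR (c * (s - a)) * (2 * ((y s)^T *m A *m y s) 0 0).
  have : H b <= H a.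
    apply: (ler0_is_derive_le (df := dH)) ab _ _ _.
    - move=> s sab; have dEs := dE s sab.
      have de := is_derive_expR_affine c a s.
      exact: is_deriveM.
    - move=> s _; have := lognorm_quadratic_le A (y s); rewrite -E_enorm -/mu.
      have := expR_gt0 (c * (s - a)); rewrite /dH /c; nra.
    - move=> r; apply: continuousM; last first.
        by move: r; apply: continuous_subspaceT; apply: expR_affine_continuous.
      move: r; apply: continuous_big => [|i _]; first exact: add_continuous.
      by move=> r; apply: continuousM; apply: cy.
  rewrite /H subrr mulr0 expR0 mulr1 => HbHa.
  have -> : E b = H b * expR (2 * mu * (b - a)).
    by rewrite /H -mulrA -expRD /c -mulrDl addNr mul0r expR0 mulr1.
  by rewrite ler_wpM2r ?expR_ge0.
rewrite -ler_sqr ?nnegrE ?mulr_ge0 ?enorm_ge0 ?expR_ge0 //.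
by rewrite exprMn -(E_enorm a) -(E_enorm b) -expRM_natl mulrA.
Qed.

(* For [e = +-1], [e g(r) - K/mu e^(mu (r - a))] is nonincreasing. *)
Lemma exp_growth_increment_le (R : realType) (g dg : R -> R) (K mu a b : R) :
  mu != 0 -> a <= b ->
  (forall s : R, a < s < b -> is_derive s 1 g (dg s)) ->
  (forall s : R, a < s < b -> `|dg s| <= K * expR (mu * (s - a))) ->
  {within `[a, b], continuous g} ->
  `|g b - g a| <= K / mu * (expR (mu * (b - a)) - 1).
Proof.
move=> mu0 ab dg_ dg_le cg.
have signed e : `|e| = 1 -> e * (g b - g a) <= K / mu * (expR (mu * (b - a)) - 1).
  move=> e1; pose F r := e * g r - K / mu * expR (mu * (r - a)).
  have : F b <= F a.
    apply: (ler0_is_derive_le (df := fun s => e * dg s - K * expR (mu * (s - a)))) ab _ _ _.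
    - move=> s sab; have dgs := dg_ s sab; have de := is_derive_expR_affine mu a s.
      by apply: is_derive_eq; rewrite (mulrC (expR _)) [_ *: (_ * _)]mulrA divfK.
    - move=> s sab; rewrite subr_le0; apply: le_trans (ler_norm _) _.
      by rewrite normrM e1 mul1r dg_le.
    - move=> r; apply: (@continuousB _ _ (subspace `[a, b]) (fun r => e * g r)
        (fun r => K / mu * expR (mu * (r - a)))).
        by apply: continuousM; [exact: cst_continuous | exact: cg].
      apply: continuousM; first exact: cst_continuous.
      by move: r; apply: continuous_subspaceT; apply: expR_affine_continuous.
  by rewrite /F subrr mulr0 expR0 mulrBr mulrBr !mulr1; lra.
rewrite ler_norml; apply/andP; split; last first.
  by rewrite -[g b - g a]mul1r; apply: signed; rewrite normr1.
by rewrite lerNl -[- (g b - g a)]mulN1r; apply: signed; rewrite normrN normr1.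
Qed.

Lemma exp_increment_le_of_ln_bound (R : realType) (K mu alpha h : R) :
  0 < mu -> 0 <= K -> 0 <= alpha ->
  (K = 0 \/ h <= ln (mu * alpha / K + 1) / mu) ->
  K / mu * (expR (mu * h) - 1) <= alpha.
Proof.
move=> mu_gt0 K_ge0 alpha_ge0 dwell.
have [->|Kn0] := eqVneq K 0; first by rewrite !mul0r.
have K_gt0 : 0 < K by rewrite lt_neqAle eq_sym Kn0.
have {dwell} : h <= ln (mu * alpha / K + 1) / mu.
  by case: dwell => // K0; move: Kn0; rewrite K0 eqxx.
rewrite ler_pdivlMr // mulrC => dwell.
have ratio_ge0 : 0 <= mu * alpha / K by rewrite divr_ge0 // ?mulr_ge0 // ltW.
have arg_gt0 : 0 < mu * alpha / K + 1 by lra.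
have -> : alpha = K / mu * (mu * alpha / K) by field; rewrite ?gt_eqF.
rewrite ler_wpM2l ?divr_ge0 ?(ltW mu_gt0) //.
by rewrite lerBlDr -[leRHS]lnK ?posrE // ler_expR.
Qed.

Section EventTimes.
Variables (R : realType) (T : R) (t : nat -> R).
Hypothesis t_incr : forall k, t k < t k.+1.
Hypothesis attempts_are_events : forall j : nat, exists k, t k = j%:R * T.

Lemma event_time_le : {homo t : m n / (m <= n)%N >-> m <= n}.
Proof. by apply: homo_leq => [//|? ? ?|k]; [exact: le_trans | exact: ltW]. Qed.

Lemma event_time_ltW m n : t m < t n -> (m < n)%N.
Proof.
by move=> tmn; rewrite ltnNge; apply: contraTN tmn => /event_time_le; rewrite leNgt.
Qed.

Lemma no_attempt_between k s : t k < s < t k.+1 -> forall j : nat, s != j%:R * T.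
Proof.
move=> /andP [tks stk] j; apply/eqP => sj; have [m tm] := attempts_are_events j.
have km : (k < m)%N by apply: event_time_ltW; rewrite tm -sj.
have mk : (m < k.+1)%N by apply: event_time_ltW; rewrite tm -sj.
by move: (leq_trans mk km); rewrite ltnn.
Qed.

Lemma attempt_period_cover k : 0 < T -> 0 <= t k ->
  exists j : nat, j%:R * T <= t k /\ t k.+1 <= j.+1%:R * T.
Proof.
move=> T_gt0 tk_ge0; exists (Num.truncn (t k / T)).
have /andP [lo hi] := truncn_itv (divr_ge0 tk_ge0 (ltW T_gt0)).
rewrite ler_pdivlMr // ltr_pdivrMr // in lo hi; split => //.
have [m tm] := attempts_are_events (Num.truncn (t k / T)).+1.
have km : (k < m)%N by apply: event_time_ltW; rewrite tm.
by rewrite -tm; apply: event_time_le.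
Qed.

Lemma hold_on_event_interval (U : Type) (u : R -> U) k : 0 < T -> 0 <= t k ->
  (forall (j : nat) s, j%:R * T <= s < j.+1%:R * T -> u s = u (j%:R * T)) ->
  forall s, t k <= s < t k.+1 -> u s = u (t k).
Proof.
move=> T_gt0 tk_ge0 u_hold s; have [j [jT_tk tk1_jT]] := attempt_period_cover T_gt0 tk_ge0.
have in_period r : t k <= r < t k.+1 -> j%:R * T <= r < j.+1%:R * T.
  by move=> /andP [tk_r r_tk1]; rewrite (le_trans jT_tk tk_r) (lt_le_trans r_tk1 tk1_jT).
by move=> /in_period /u_hold ->; rewrite (u_hold j (t k)) // in_period // lexx t_incr.
Qed.

End EventTimes.

Section Platoon.
Variables (R : realType) (n : nat) (Ac : 'M[R]_(nx n)) (Bc : 'M[R]_(nx n, nu n)).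

Local Notation W := (Ac *m (b1 R n)^T + Bc *m (b2 R n)^T).

Lemma xtildeE x u : xtilde x u = b1 R n *m x + b2 R n *m u.
Proof. by rewrite /xtilde /b1 /b2 !mul_col_mx !mul1mx !mul0mx add_col_mx addr0 add0r. Qed.

Lemma Atilde_mul_xtilde x u :
  Atilde Ac Bc *m xtilde x u = b1 R n *m (Ac *m x + Bc *m u).
Proof.
by rewrite /Atilde /xtilde /b1 mul_block_col !mul0mx addr0 mul_col_mx mul1mx mul0mx.
Qed.

Lemma drift_mul_xtilde x u : W *m xtilde x u = Ac *m x + Bc *m u.
Proof.
rewrite /b1 /b2 /xtilde !tr_col_mx !trmx1 !trmx0 mulmxDl -!mulmxA !mul_row_col.
by rewrite !mul1mx !mul0mx addr0 add0r.
Qed.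

Lemma phi_ge0 : 0 <= phi Ac Bc.
Proof. exact: bigmax_ge_id. Qed.

Lemma opnorm_le_phi i : (2 <= i <= n)%N -> opnorm ((q R n i)^T *m W) <= phi Ac Bc.
Proof.
move=> i_range; rewrite /phi.
by apply: (le_bigmax_seq _ i xpredT (fun j => opnorm ((q R n j)^T *m W)));
  rewrite ?mem_index_iota ?ltnS.
Qed.

Lemma dist_increment_le (L : nat -> R) (x : R -> 'cV[R]_(nx n)) (u0 : 'cV[R]_(nu n))
    (a b : R) i :
  lognorm (Atilde Ac Bc) != 0 -> a <= b -> (2 <= i <= n)%N ->
  (forall s : R, a < s < b -> is_derive s 1 x (Ac *m x s + Bc *m u0)) ->
  {within `[a, b], continuous x} ->
  `|dist L x i b - dist L x i a| <=
    phi Ac Bc * enorm (xtilde (x a) u0) / lognorm (Atilde Ac Bc) *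
    (expR (lognorm (Atilde Ac Bc) * (b - a)) - 1).
Proof.
move=> mu0 ab i_range dx cx; set mu := lognorm _.
pose y r := xtilde (x r) u0.
have entry_cont p (V : 'M[R]_(p, nx n)) j c :
    {within `[a, b], continuous (fun r => (V *m x r) j 0 + c)}.
  move=> r; apply: continuousD; last exact: cst_continuous.
  exact: continuous_comp (cx r) (@mulmx_entry_continuous _ _ _ _ V j 0 (x r)).
have growth r : a <= r <= b -> enorm (y r) <= enorm (y a) * expR (mu * (r - a)).
  move=> /andP [ar rb]; apply: enorm_linear_flow_le => // [s /andP [a_s sr]|j].
    have dxs : is_derive s 1 x (Ac *m x s + Bc *m u0).
      by apply: dx; rewrite a_s (lt_le_trans sr rb).
    rewrite /y Atilde_mul_xtilde; under eq_fun do rewrite xtildeE.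
    have := is_deriveD (is_derive_mulmx (b1 R n) dxs) (is_derive_cst (b2 R n *m u0) s 1).
    by rewrite addr0.
  have -> : (fun r => y r j 0) = fun r => (b1 R n *m x r) j 0 + (b2 R n *m u0) j 0.
    by apply/funext => s; rewrite /y xtildeE [LHS]mxE.
  apply: continuous_subspaceW (entry_cont _ _ _ _) => s /=.
  by rewrite !in_itv /= => /andP [-> /le_trans ->].
pose qx s := ((q R n i)^T *m (Ac *m x s + Bc *m u0)) 0 0.
apply: (exp_growth_increment_le (dg := qx)) => // [s sab|s /andP [a_s sb]|].
- have /is_derive_mxP /(_ 0 0) dqx := is_derive_mulmx (q R n i)^T (dx s sab).
  by have := is_deriveB dqx (is_derive_cst (L i) s 1); rewrite subr0.
- rewrite /qx -(drift_mul_xtilde _ u0) mulmxA -mulrA.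
  apply: le_trans (opnorm_row_mulmx_le _ _) _.
  apply: le_trans (ler_wpM2r (enorm_ge0 _) (opnorm_le_phi i_range)) _.
  by rewrite ler_wpM2l ?phi_ge0 // growth // (ltW a_s) (ltW sb).
- exact: entry_cont.
Qed.

End Platoon.

Theorem theorem2 (R : realType) (n : nat)
  (Ac : 'M[R]_(nx n)) (Bc : 'M[R]_(nx n, nu n)) (L : nat -> R)
  (T : R) (x : R -> 'cV[R]_(nx n)) (u : R -> 'cV[R]_(nu n))
  (t : nat -> R) (alpha : R) :
  (* communication period and vehicle lengths *)
  0 < T ->
  (forall i, (2 <= i <= n)%N -> 0 < L i) ->
  (* platoon dynamics: x continuous on [0,oo), x' = Ac x + Bc u away from
     the communication instants s_j = j T *)
  {within `[0, +oo[%classic, continuous x} ->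
  (forall tau : R, 0 < tau -> (forall j : nat, tau != j%:R * T) ->
     is_derive tau 1 x (Ac *m x tau + Bc *m u tau)) ->
  (* u = [u0, u0hat, uhat_1, ..., uhat_{n-1}] is held constant on each
     [s_j, s_{j+1}) (zero-order hold + time-discretized braking model) *)
  (forall (j : nat) (tau : R), j%:R * T <= tau < j.+1%:R * T ->
     u tau = u (j%:R * T)) ->
  (* the time instants T = {t_0, t_1, ...} *)
  t 0%N = 0 ->
  (forall k, t k < t k.+1) ->
  (* S subset of T *)
  (forall j : nat, exists k, t k = j%:R * T) ->
  0 < alpha ->
  0 < lognorm (Atilde Ac Bc) ->
  (* inter-event time condition; when phi*||xtilde(t_k)|| = 0 the bound
     ln(+oo) imposes no constraint *)
  (forall k,
     phi Ac Bc * enorm (xtilde (x (t k)) (u (t k))) = 0 \/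
     t k.+1 - t k <=
       ln (lognorm (Atilde Ac Bc) * alpha
           / (phi Ac Bc * enorm (xtilde (x (t k)) (u (t k)))) + 1)
       / lognorm (Atilde Ac Bc)) ->
  forall (k i : nat) (tau : R), (2 <= i <= n)%N -> t k <= tau < t k.+1 ->
    `| dist L x i tau - dist L x i (t k) | <= alpha.
Proof.
(* The vehicle lengths cancel in [d_i(tau) - d_i(t_k)]. *)
move=> T_gt0 _ x_cont x_ode u_hold t0 t_incr attempts alpha_gt0 mu_gt0 dwell k i tau i_range.
move=> /andP [tk_tau tau_tk1].
have tk_ge0 : 0 <= t k by rewrite -t0; apply: event_time_le.
have hold := hold_on_event_interval t_incr attempts T_gt0 tk_ge0 u_hold.
apply: le_trans (dist_increment_le (u0 := u (t k)) _ (lt0r_neq0 mu_gt0) tk_tau i_range _ _) _.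
- move=> s /andP [tk_s s_tau]; have s_tk1 := lt_trans s_tau tau_tk1.
  have s_between : t k < s < t k.+1 by rewrite tk_s s_tk1.
  rewrite -(hold s) ?(ltW tk_s) ?s_tk1 //; apply: x_ode.
    exact: le_lt_trans tk_ge0 tk_s.
  apply: (no_attempt_between t_incr attempts s_between).
- apply: continuous_subspaceW x_cont => s /=; rewrite !in_itv /= andbT => /andP [tk_s _].
  exact: le_trans tk_s.
- apply: exp_increment_le_of_ln_bound => //; first by rewrite mulr_ge0 ?phi_ge0 ?enorm_ge0.
    exact: ltW.
  case: (dwell k) => [K0|dwell_k]; [by left | right].
  by apply: le_trans dwell_k; rewrite lerD2r ltW.
Qed.
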